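(* Let $p$ be a prime, let $\alpha,n\in\mathbb{N}$ with $\alpha\geqslant2$, and let $r,s,t\in\mathbb{Z}$ with $0\leqslant s,t<p^{\alpha-2}$. Then $$p^{-\left\lfloor\frac{p^{\alpha-2}n+s-p^{\alpha-1}}{\varphi(p^{\alpha})}\right\rfloor}\sum_{k\equiv p^{\alpha-2}r+t\ (\mathrm{mod}\ p^{\alpha})}\binom{p^{\alpha-2}n+s}k(-1)^k\equiv(-1)^t\binom st\Bigg(p^{-\left\lfloor\frac{n-p}{\varphi(p^2)}\right\rfloor}\sum_{k\equiv r\ (\mathrm{mod}\ p^2)}\binom nk(-1)^k\Bigg)\pmod p.$$
   Context: $\varphi$ is Euler's totient function. Sums run over all integers $k$ in the indicated residue class with $\binom Nk=0$ unless $0\le k\le N$. For rationals $u,v$, $u\equiv v\pmod p$ means $\operatorname{ord}_p(u-v)\geq 1$. *)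

From mathcomp Require Import all_boot all_order all_algebra.
Set Implicit Arguments. Unset Strict Implicit. Unset Printing Implicit Defensive.
Import Order.TTheory GRing.Theory Num.Theory.
Local Open Scope ring_scope.

Definition ordp (p : nat) (q : rat) : int :=
  (logn p `|numq q|%N)%:Z - (logn p `|denq q|%N)%:Z.

(* u == v (mod p) for rationals: ord_p(u - v) >= 1 (ord_p 0 = +oo). *)
Definition rat_congr (p : nat) (u v : rat) : Prop :=
  u - v = 0 \/ 1 <= ordp p (u - v).

(* \sum_{k == c (mod m)} binom(N,k) (-1)^k, k over all integers; only
   0 <= k <= N contribute. *)
Definition altsum (N : nat) (c : int) (m : nat) : rat :=
  \sum_(0 <= k < N.+1 | (k%:Z == c %[mod m%:Z])%Z)
     ('C(N, k))%:R * (-1) ^+ k.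

(* Write coefsum m c f for the sum of the coefficients of f in Z[X] at the exponents
   congruent to c mod m, so that the alternating binomial sums are coefsum m c ((1 - X)^N).
   Modulo p, (1 - X)^(p^b) = 1 - X^(p^b) + p g; hence, with q = p^b,
     (1 - X)^(qn + s) = (1 - X)^s * sum_j C(n, j) (p g)^j (1 - X^q)^(n - j).
   As deg (1 - X)^s < q, the term j = 0 contributes exactly (-1)^t C(s, t) coefsum p^2 r ((1 - X)^n)
   at the residue qr + t mod qp^2.  The term j > 0 is p^j C(n, j) times a combination of the sums
   coefsum p^2 c' ((1 - X)^(n - j)), which the p^2 analogue of Fleck's congruence makes divisible by
   p^floor((n - j - p) / phi(p^2)); altogether every such term is divisible by p^(e + 1), where
   e = floor((n - p) / phi(p^2)) is also the exponent on the left-hand side.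
   Fleck's congruence itself follows from (1 - X)^p = 1 - X^p + p (1 - X) k, since coefsum p
   vanishes on multiples of 1 - X^p; its p^2 analogue reduces to it by the same expansion
   with q = p. *)

From HB Require Import structures.
From mathcomp Require Import all_boot all_order all_algebra.
From mathcomp Require Import ring zify.
Set Implicit Arguments. Unset Strict Implicit. Unset Printing Implicit Defensive.
Import Order.TTheory GRing.Theory Num.Theory.
Local Open Scope ring_scope.

Section PrimeBinomial.
Variables (R : comPzRingType) (p : nat).

Lemma exprD_natmul (a b : R) n : exists h, (a + p%:R * b) ^+ n = a ^+ n + p%:R * h.
Proof.
elim: n => [|n [h IH]]; first by exists 0; rewrite !expr0 mulr0 addr0.
by exists (h * a + a ^+ n * b + p%:R * h * b); rewrite exprSr IH exprSr; ring.
Qed.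

Hypothesis p_pr : prime p.

Lemma exprD_prime (x y : R) : exists h, (x + y) ^+ p = x ^+ p + y ^+ p + p%:R * h.
Proof.
move: p_pr; case: p => // n pr_n.
exists (\sum_(i < n)
          (x ^+ (n.+1 - bump 0 i) * y ^+ bump 0 i) *+ ('C(n.+1, bump 0 i) %/ n.+1)).
rewrite exprDn big_ord_recr big_ord_recl /= subn0 subnn bin0 binn !mulr1n.
rewrite expr0 mulr1 mul1r mulr_sumr addrAC; congr (_ + _ + _).
apply: eq_bigr => i _; rewrite mulr_natl -mulrnA divnK //.
by apply: prime_dvd_bin; rewrite //= ltnS ltn_ord.
Qed.

Lemma expr1B_prime (y : R) : exists h, (1 - y) ^+ p = 1 - y ^+ p + p%:R * h.
Proof.
have [h ->] := exprD_prime 1 (- y); rewrite expr1n exprNn.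
have [Dp | odd_p] := even_prime p_pr; last first.
  by exists h; rewrite -signr_odd odd_p expr1 mulN1r.
by exists (h + y ^+ 2); rewrite Dp; ring.
Qed.

Lemma expr1B_prime_exp (y : R) k :
  exists g, (1 - y) ^+ (p ^ k) = 1 - y ^+ (p ^ k) + p%:R * g.
Proof.
elim: k => [|k [g IH]]; first by exists 0; rewrite expn0 !expr1 mulr0 addr0.
rewrite expnSr !exprM IH.
have [h1 ->] := exprD_natmul (1 - y ^+ (p ^ k)) g p.
have [h2 ->] := expr1B_prime (y ^+ (p ^ k)).
by exists (h2 + h1); rewrite mulrDr addrA.
Qed.

End PrimeBinomial.

Lemma eqz_mod_scale (q i c m : int) : q != 0 ->
  (q * i == c %[mod q * m])%Z = (q %| c)%Z && (i == (c %/ q)%Z %[mod m])%Z.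
Proof.
move=> q_neq0; rewrite !eqz_mod_dvd.
have [/dvdzP[c' ->] | q_c] /= := boolP (q %| c)%Z.
  by rewrite mulzK // [c' * q]mulrC -mulrBr dvdz_mul2l.
apply: contraNF q_c => /(dvdz_trans (dvdz_mulr m (dvdzz q))) q_qiBc.
by rewrite -[c](subKr (q * i)) rpredB // dvdz_mulr.
Qed.

Section CoefSum.
Variable R : comNzRingType.
Implicit Types (f g h G : {poly R}) (m q : nat) (c : int).

Definition coefsum m c f : R := \sum_(i < size f | (i%:Z == c %[mod m])%Z) f`_i.

Lemma coefsum_widen m c f n : (size f <= n)%N ->
  coefsum m c f = \sum_(i < n | (i%:Z == c %[mod m])%Z) f`_i.
Proof.
move=> le_f_n; rewrite /coefsum.
rewrite (big_ord_widen_cond _ (fun i => (i%:Z == c %[mod m])%Z) (fun i => f`_i) le_f_n).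
rewrite [RHS](bigID (fun i : 'I_n => (i < size f)%N)) /= [X in _ = _ + X]big1 ?addr0 //.
by move=> i /andP[_]; rewrite -leqNgt => /(nth_default 0).
Qed.

Lemma coefsumE m c f :
  coefsum m c f = \sum_(i < size f) f`_i * ((i%:Z == c %[mod m])%Z)%:R.
Proof.
by rewrite /coefsum big_mkcond; apply: eq_bigr => i _; case: ifP; rewrite ?mulr1 ?mulr0.
Qed.

Fact coefsum0 m c : coefsum m c 0 = 0.
Proof. by rewrite /coefsum size_poly0 big_ord0. Qed.

Fact coefsumD m c : {morph coefsum m c : f g / f + g}.
Proof.
move=> f g; set n := maxn (size f) (size g).
rewrite !(@coefsum_widen _ _ _ n) ?size_polyD ?leq_maxl ?leq_maxr // -big_split.
by apply: eq_bigr => i _; rewrite coefD.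
Qed.

Fact coefsumZ m c : GRing.scalable_for *%R (coefsum m c).
Proof.
move=> a f; rewrite !(@coefsum_widen _ _ _ (size f)) ?size_scale_leq // mulr_sumr.
by apply: eq_bigr => i _; rewrite coefZ.
Qed.

HB.instance Definition _ m c :=
  GRing.isNmodMorphism.Build {poly R} R (coefsum m c) (coefsum0 m c, coefsumD m c).
HB.instance Definition _ m c :=
  GRing.isScalable.Build R {poly R} R *%R (coefsum m c) (coefsumZ m c).

Lemma coefsum_Xn m c k : coefsum m c 'X^k = ((k%:Z == c %[mod m])%Z)%:R.
Proof.
rewrite (@coefsum_widen _ _ _ k.+1) ?size_polyXn // big_mkcond big_ord_recr /=.
rewrite big1 ?add0r => [|i _]; last by rewrite coefXn eq_sym (ltn_eqF (ltn_ord i)) if_same.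
by rewrite coefXn eqxx; case: ifP.
Qed.

Lemma coefsumMXn m c f k : coefsum m c (f * 'X^k) = coefsum m (c - k%:Z) f.
Proof.
rewrite -[f]coefK poly_def mulr_suml !linear_sum; apply: eq_bigr => i _ /=.
by rewrite -scalerAl -exprD !linearZ /= !coefsum_Xn PoszD -(eqz_modDr k%:Z i) subrK.
Qed.

Lemma coefsumM m c h f :
  coefsum m c (h * f) = \sum_(i < size h) h`_i * coefsum m (c - i%:Z) f.
Proof.
rewrite -{1}[h]coefK poly_def mulr_suml linear_sum; apply: eq_bigr => i _ /=.
by rewrite -scalerAl [_ * f]mulrC linearZ /= coefsumMXn.
Qed.

Lemma coefsumM_1BXn m c f : coefsum m c (f * (1 - 'X^m)) = 0.
Proof.
rewrite mulrBr mulr1 raddfB /= coefsumMXn; apply/eqP; rewrite subr_eq0; apply/eqP.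
by apply: eq_bigl => i; rewrite -(modzDr (c - m%:Z) m) subrK.
Qed.

Lemma coefsum_comp_Xn q m c G : (0 < q)%N ->
  coefsum (q * m) c (G \Po 'X^q) =
  if (q%:Z %| c)%Z then coefsum m (c %/ q%:Z)%Z G else 0.
Proof.
move=> q_gt0; have q_neq0 : q%:Z != 0 by rewrite eqz_nat -lt0n.
rewrite comp_polyE linear_sum.
under eq_bigr => i _ do rewrite linearZ /= -exprM coefsum_Xn !PoszM eqz_mod_scale //.
case: ifP => _; first by rewrite coefsumE.
by rewrite big1 // => i _; rewrite mulr0.
Qed.

Lemma coefsumM_comp_Xn q m (r : int) t h G : (size h <= q)%N -> (t < q)%N ->
  coefsum (q * m) (q%:Z * r + t%:Z) (h * (G \Po 'X^q)) = h`_t * coefsum m r G.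
Proof.
move=> le_h_q lt_t_q; have q_gt0 : (0 < q)%N by apply: leq_ltn_trans lt_t_q.
have q_neq0 : q%:Z != 0 by rewrite eqz_nat -lt0n.
rewrite coefsumM (eq_bigr (fun i : 'I_(size h) =>
   if i == t :> nat then h`_i * coefsum m r G else 0)) => [|i _]; last first.
  rewrite coefsum_comp_Xn //; case: eqP => [-> | t_neq_i].
    by rewrite addrK dvdz_mulr // mulKz.
  rewrite -addrA (rpredDl _ (dvdz_mulr _ (dvdzz _))).
  case: dvdzP => [[z Dz] | _]; last by rewrite mulr0.
  have lt_i_q : i%:Z < q%:Z by rewrite ltz_nat (leq_trans (ltn_ord i)).
  have lt_t_q' : t%:Z < q%:Z by rewrite ltz_nat.
  exfalso; apply: t_neq_i; case: (ltrgtP z 0) => [z_lt0|z_gt0|z_eq0]; nia.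
rewrite -big_mkcond (big_ord1_eq _ (fun i => h`_i * coefsum m r G)).
by case: ltnP => // le_h_t; rewrite nth_default ?mul0r.
Qed.

Lemma coef_1BX_exp N k : ((1 - 'X : {poly R}) ^+ N)`_k = (-1) ^+ k *+ 'C(N, k).
Proof.
rewrite exprBn coef_sum (eq_bigr (fun i : 'I_N.+1 =>
   if i == k :> nat then (-1) ^+ i *+ 'C(N, i) else 0)) => [|i _]; last first.
  have -> : (-1 : {poly R}) ^+ i = ((-1) ^+ i)%:P by rewrite rmorphXn rmorphN1.
  rewrite expr1n mulr1 coefMn coefCM coefXn eq_sym.
  by case: eqP; rewrite ?mulr1 ?mulr0 ?mul0rn.
rewrite -big_mkcond (big_ord1_eq _ (fun i => (-1) ^+ i *+ 'C(N, i))).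
by case: ltnP => // lt_N_k; rewrite bin_small.
Qed.

Lemma size_1BX_exp N : (size ((1 - 'X : {poly R}) ^+ N) <= N.+1)%N.
Proof. by apply/leq_sizeP => j lt_N_j; rewrite coef_1BX_exp bin_small ?mulr0n. Qed.

End CoefSum.

Lemma dvdz_coefsumMl (d : int) m (h f : {poly int}) :
  (forall c, (d %| coefsum m c f)%Z) -> forall c, (d %| coefsum m c (h * f))%Z.
Proof. by move=> d_f c; rewrite coefsumM; apply: rpred_sum => i _; apply: dvdz_mull. Qed.

Lemma dvdz_coefsum_comp_Xn (d : int) q m (G : {poly int}) : (0 < q)%N ->
  (forall c, (d %| coefsum m c G)%Z) -> forall c, (d %| coefsum (q * m) c (G \Po 'X^q))%Z.
Proof. by move=> q_gt0 d_G c; rewrite coefsum_comp_Xn //; case: ifP. Qed.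

Lemma dvdz_pexp_mul (d x y : int) a j :
  (d ^+ (a - j) %| y)%Z -> (d ^+ a %| d ^+ j * x * y)%Z.
Proof.
move=> d_y; have le_a : (a <= j + (a - j))%N by rewrite -leq_subLR.
apply: dvdz_trans (dvdz_exp2l d le_a) _; rewrite exprD -mulrA.
by apply: dvdz_mul (dvdzz _) (dvdz_mull x d_y).
Qed.

Section Fleck.
Variable p : nat.
Hypothesis p_pr : prime p.

Lemma expr1BX_prime :
  exists k : {poly int}, (1 - 'X) ^+ p = 1 - 'X^p + p%:R * ((1 - 'X) * k).
Proof.
have [h Dh] := expr1B_prime p_pr ('X : {poly int}).
have /factor_theorem[k Dk] : root h 1.
  have := congr1 (horner^~ 1) Dh; rewrite -polyC_natr !hornerE expr1n !subrr.
  rewrite expr0n gtn_eqF ?prime_gt0 //= add0r => /esym/eqP; rewrite mulf_eq0 pnatr_eq0.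
  by rewrite gtn_eqF ?prime_gt0.
by exists (- k); rewrite Dh Dk polyC1; congr (_ + _); ring.
Qed.

Lemma fleck_dvd a N c : (a * (p - 1) < N)%N ->
  (p%:Z ^+ a %| coefsum p c ((1 - 'X) ^+ N))%Z.
Proof.
have [k Dk] := expr1BX_prime; have p_gt0 := prime_gt0 p_pr.
elim: a N c => [|a IH] N c lt_N; first by rewrite expr0 dvd1z.
have le_p_N : (p <= N)%N by move: lt_N; rewrite mulSn; lia.
have -> : (1 - 'X) ^+ N = (1 - 'X) ^+ (N - p) * (1 - 'X^p)
                          + (k * (1 - 'X) ^+ (N - p).+1) *+ p.
  by rewrite -{1}(subnK le_p_N) exprD Dk exprSr -mulr_natl; ring.
rewrite raddfD /= coefsumM_1BXn add0r raddfMn /= -mulr_natr natz [_ ^+ a.+1]exprSr.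
apply: dvdz_mul (dvdzz _); apply: dvdz_coefsumMl => {}c; apply: IH.
by move: lt_N; rewrite mulSn; lia.
Qed.

Lemma dvdz_coefsum_perturb q m n (d : int) (A g : {poly int}) : (0 < q)%N ->
  (forall j c, (0 < j <= n)%N ->
     (d %| p%:Z ^+ j * 'C(n, j)%:Z * coefsum m c ((1 - 'X) ^+ (n - j)))%Z) ->
  forall c, (d %| coefsum (q * m) c (A * (1 - 'X^q + p%:R * g) ^+ n)
                 - coefsum (q * m) c (A * ((1 - 'X) ^+ n \Po 'X^q)))%Z.
Proof.
move=> q_gt0 d_terms c.
have comp_Xq k : (1 - 'X) ^+ k \Po 'X^q = (1 - 'X^q : {poly int}) ^+ k.
  by rewrite rmorphXn rmorphB rmorph1 /= comp_polyX.
rewrite exprDn big_ord_recl /= subn0 expr0 mulr1 bin0 mulr1n comp_Xq mulrDr raddfD /=.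
rewrite addrAC subrr add0r mulr_sumr raddf_sum /=; apply: rpred_sum => j _.
set i := bump 0 j; have le_i_n : (0 < i <= n)%N by rewrite /i /bump /= add1n ltn_ord.
have -> : A * ((1 - 'X^q) ^+ (n - i) * (p%:R * g) ^+ i *+ 'C(n, i)) =
          A * g ^+ i * (((p%:Z ^+ i * 'C(n, i)%:Z) *: (1 - 'X) ^+ (n - i)) \Po 'X^q).
  rewrite comp_polyZ comp_Xq -mul_polyC rmorphM rmorphXn /= -!natz !rmorph_nat.
  by rewrite -mulr_natr exprMn; ring.
apply: dvdz_coefsumMl; apply: dvdz_coefsum_comp_Xn => // c'.
by rewrite linearZ /=; apply: d_terms.
Qed.

Lemma fleck_sq_dvd a N c : (a * (p * (p - 1)) + p <= N)%N ->
  (p%:Z ^+ a %| coefsum (p * p) c ((1 - 'X) ^+ N))%Z.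
Proof.
move=> le_N; have p_gt0 := prime_gt0 p_pr; have p_gt1 := prime_gt1 p_pr.
have [h Dh] := expr1B_prime p_pr ('X : {poly int}).
have lt_M : (a * (p - 1) < N %/ p)%N.
  by rewrite leq_divRL //; nia.
rewrite (divn_eq N p) exprD mulnC exprM Dh mulrC.
set M := (N %/ p)%N; set A := (1 - 'X) ^+ (N %% p)%N.
rewrite -[coefsum _ _ _](subrK (coefsum (p * p) c (A * ((1 - 'X) ^+ M \Po 'X^p)))).
apply: rpredD; last first.
  by apply: dvdz_coefsumMl; apply: dvdz_coefsum_comp_Xn => // c'; apply: fleck_dvd.
apply: dvdz_coefsum_perturb => // j c' /andP[j_gt0 le_j_M].
apply: dvdz_pexp_mul; have [le_a_j | lt_j_a] := leqP a j.
  by move: le_a_j; rewrite -subn_eq0 => /eqP ->; rewrite dvd1z.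
by apply: fleck_dvd; nia.
Qed.

Lemma fleck_sq_term_dvd e n j c :
  (e * (p * (p - 1)) + p <= n)%N -> (0 < j <= n)%N ->
  (p%:Z ^+ e.+1 %| p%:Z ^+ j * 'C(n, j)%:Z * coefsum (p * p) c ((1 - 'X) ^+ (n - j)))%Z.
Proof.
move=> le_n /andP[j_gt0 le_j_n]; have p_gt1 := prime_gt1 p_pr.
have [le_e_j | lt_j_e] := leqP e.+1 j.
  by apply: dvdz_mulr; apply: dvdz_mulr; apply: dvdz_exp2l.
have [le_nj | lt_nj] := leqP ((e.+1 - j) * (p * (p - 1)) + p) (n - j).
  by apply: dvdz_pexp_mul; apply: fleck_sq_dvd.
(* Only for j = 1 and n = p + e phi(p^2) is Fleck's bound one short; then p divides C(n, 1). *)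
have [Dj Dn] : j = 1%N /\ n = (p * (e * (p - 1) + 1))%N by nia.
have e_gt0 : (0 < e)%N by rewrite -Dj.
rewrite Dj bin1 expr1 Dn PoszM -(prednK e_gt0) !exprS -mulrA.
apply: dvdz_mul (dvdzz _) _.
apply: dvdz_mul (dvdz_mulr _ (dvdzz _)) (fleck_sq_dvd _ _); nia.
Qed.

End Fleck.

Lemma coefsum_lucas_dvd p b n s t (r : int) e : prime p ->
  (s < p ^ b)%N -> (t < p ^ b)%N -> (e * (p * (p - 1)) + p <= n)%N ->
  (p%:Z ^+ e.+1 %| coefsum (p ^ b * (p * p)) ((p ^ b)%:Z * r + t%:Z)
                           ((1 - 'X) ^+ (p ^ b * n + s))
                  - ((-1) ^+ t *+ 'C(s, t)) * coefsum (p * p) r ((1 - 'X) ^+ n))%Z.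
Proof.
move=> p_pr lt_s lt_t le_n; have q_gt0 : (0 < p ^ b)%N by rewrite expn_gt0 prime_gt0.
have [g Dg] := expr1B_prime_exp p_pr ('X : {poly int}) b.
rewrite -coef_1BX_exp -(@coefsumM_comp_Xn _ (p ^ b)%N) ?(leq_trans (size_1BX_exp _ _)) //.
rewrite addnC exprD exprM Dg.
by apply: dvdz_coefsum_perturb => // j c'; apply: fleck_sq_term_dvd.
Qed.

Lemma divz_mul_addr (q d x s : int) : 0 < q -> d != 0 -> 0 <= s < q ->
  ((q * x + s) %/ (q * d))%Z = (x %/ d)%Z.
Proof.
move=> q_gt0 d_neq0 /andP[s_ge0 lt_s_q].
have -> : q * x + s = (x %/ d)%Z * (q * d) + (q * (x %% d)%Z + s).
  by rewrite {1}(divz_eq x d); ring.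
rewrite divzMDl ?(mulf_neq0 (lt0r_neq0 q_gt0)) // [((_ + s) %/ _)%Z]divz_small ?addr0 //.
rewrite abszM PoszM gtz0_abs //; have := modz_ge0 x d_neq0; have := ltz_mod x d_neq0; nia.
Qed.

Lemma altsumE N c m : altsum N c m = (coefsum m c ((1 - 'X) ^+ N))%:~R.
Proof.
rewrite /altsum big_mkord (coefsum_widen _ _ (size_1BX_exp _ N)) rmorph_sum.
by apply: eq_bigr => k _; rewrite coef_1BX_exp rmorphMn rmorphXn rmorphN1 mulr_natl.
Qed.

Lemma rat_congr_dvdz p (u v : rat) (z : int) :
  prime p -> (p%:Z %| z)%Z -> u - v = z%:~R -> rat_congr p u v.
Proof.
move=> p_pr p_z Duv; rewrite /rat_congr Duv /ordp numq_int denq_int logn1 subr0 lez_nat.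
have [-> | z_neq0] := eqVneq z 0; [by left | right].
by rewrite logn_gt0 mem_primes p_pr absz_gt0 z_neq0.
Qed.

Lemma exprzN_mul_dvdz (p : nat) (e w : int) : (0 < p)%N ->
  (0 <= e -> (p%:Z ^+ (`|e|%N).+1 %| w)%Z) ->
  exists2 z : int, (p%:Z %| z)%Z & p%:Q ^ (- e) * w%:~R = z%:~R.
Proof.
move=> p_gt0; case: e => en dvd_w.
  have /dvdzP[z ->] := dvd_w isT; exists (z * p%:Z); first exact: dvdz_mull.
  rewrite -invr_expz -exprnP !rmorphM !rmorphXn exprSr /=.
  have p_neq0 : (p%:Z%:~R : rat) != 0 by rewrite intr_eq0 eqz_nat -lt0n.
  by field; rewrite expf_neq0.
exists (p%:Z * (p%:Z ^+ en * w)); first exact: dvdz_mulr.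
by rewrite NegzE opprK -exprnP !rmorphM !rmorphXn exprS mulrA.
Qed.

Theorem theorem1p7 (p alpha n : nat) (r : int) (s t : nat) :
  prime p -> (2 <= alpha)%N ->
  (s < p ^ (alpha - 2))%N -> (t < p ^ (alpha - 2))%N ->
  rat_congr p
    ((p%:Q) ^ (- (((p ^ (alpha - 2) * n + s)%N%:Z - (p ^ (alpha - 1))%N%:Z)
                    %/ (totient (p ^ alpha))%:Z)%Z)
     * altsum (p ^ (alpha - 2) * n + s)
              ((p ^ (alpha - 2))%N%:Z * r + t%:Z) (p ^ alpha))
    ((-1) ^+ t * ('C(s, t))%:R *
     ((p%:Q) ^ (- ((n%:Z - p%:Z) %/ (totient (p ^ 2))%:Z)%Z)
      * altsum n r (p ^ 2))).
Proof.
move=> p_pr; case: alpha => [|[|b]] // _; rewrite !subSS !subn0 => lt_s lt_t.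
have p_gt0 := prime_gt0 p_pr; have q_gt0 : (0 < p ^ b)%N by rewrite expn_gt0 p_gt0.
have Dtot : totient (p ^ b.+2) = (p ^ b * totient (p ^ 2))%N.
  by rewrite !totient_pfactor //= expn1 expnSr mulnCA.
have Dnum : (p ^ b * n + s)%N%:Z - (p ^ b.+1)%N%:Z = (p ^ b)%N%:Z * (n%:Z - p%:Z) + s%:Z.
  by rewrite PoszD !PoszM expnSr PoszM; ring.
have F_gt0 : (0 < totient (p ^ 2))%N by rewrite totient_gt0 expn_gt0 p_gt0.
rewrite Dtot Dnum PoszM divz_mul_addr ?ltz_nat ?eqz_nat -?lt0n ?lt_s ?andbT //.
set e := ((n%:Z - p%:Z) %/ (totient (p ^ 2))%:Z)%Z.
have le_en : 0 <= e -> (`|e|%N * (p * (p - 1)) + p <= n)%N.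
  have F_neq0 : (totient (p ^ 2))%:Z != 0 by rewrite eqz_nat -lt0n.
  move=> e_ge0; have := lez_floor (n%:Z - p%:Z) F_neq0.
  rewrite -/e -{1}(gez0_abs e_ge0) totient_pfactor //= expn1 mulnC subn1.
  lia.
rewrite !altsumE -addn2 expnD -mulnn.
set A1 := coefsum _ _ ((1 - 'X) ^+ (p ^ b * n + s)).
set A2 := coefsum (p * p) r _.
have [z p_z Dz] := exprzN_mul_dvdz (w := A1 - ((-1) ^+ t *+ 'C(s, t)) * A2) p_gt0
  (fun e_ge0 => coefsum_lucas_dvd r p_pr lt_s lt_t (le_en e_ge0)).
apply: (rat_congr_dvdz p_pr p_z); rewrite -Dz rmorphB rmorphM rmorphMn rmorphXn rmorphN1 /=.
by rewrite -mulr_natr; ring.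
Qed.
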